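(* There is $J$ such that for all $j\ge J$ the following holds: if $a_{ij}$ and $a_{kl}$ are distinct points in the same cluster, with common potential $t$, then $$a_{kl}-a_{ij}=\frac{2\pi i\,(s_{k(l+H)}-s_{i(j+H)})}{d\,(F^{\circ H})'(t)}\,\nu\,\delta,$$ where $H=H(a_{ij},a_{kl})$, for some $\nu\in A_{t,H-1}$ and $\delta\in D_{i(j+H)}^{k(l+H)}$.
   Context: Setting: $d\ge1$, $f_0=p\circ\exp$ with $p$ monic of degree $d$; orbits $\mathcal{O}_i=\{a_{ij}\}_{j\ge0}$ of $f_0$ ($i=1,\dots,m$) escape on pairwise distinct dynamic rays; $P_f=\bigcup_i\mathcal{O}_i$. $t_{ij}$ is the potential of $a_{ij}$ and $s_{ij}$ the first entry of its external address, with $a_{ij}=t_{ij}+2\pi i s_{ij}/d+O(e^{-t_{ij}/2})$; potentials satisfy $t_{i(j+1)}=F(t_{ij})$ where $F(t)=e^{dt}-1$. Points $a_{ij},a_{kl}$ are in the same cluster if $t_{ij}=t_{kl}$ and $s_{ij}=s_{kl}$. For a pair in the same cluster, $H(a_{ij},a_{kl})$ is the smallest positive integer $H$ such that $a_{i(j+H)}$ and $a_{k(l+H)}$ lie in different clusters. $A_{x,n}$ is the set of $\alpha\neq0$ with $|\log|\alpha||<\sum_{r=0}^n e^{-F^r(x)/3}$ and $|\arg\alpha|<\sum_{r=0}^n e^{-F^r(x)/3}$. For $a_{ij},a_{kl}$ with equal potential in different clusters, $D_{ij}^{kl}:=\left\{\frac{d(w-z)}{2\pi i(s_{kl}-s_{ij})}: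 w\in\mathbb{D}_{1/l}(a_{kl}), z\in\mathbb{D}_{1/j}(a_{ij})\right\}$. *)

From Stdlib Require Import Reals ZArith List.
From Coquelicot Require Import Coquelicot.
Open Scope R_scope.

Definition cexp (z : C) : C :=
  (exp (fst z) * cos (snd z), exp (fst z) * sin (snd z)).

(* Monic polynomial of degree d: p(w) = w^d + sum_{k<d} c_k w^k,
   where the coefficient list [c : nat -> C] is used for k = 0..d-1. *)
Definition monic_eval (d : nat) (c : nat -> C) (w : C) : C :=
  Cplus (Cpow w d)
    (fold_right Cplus (RtoC 0) (map (fun k => Cmult (c k) (Cpow w k)) (seq 0 d))).

Definition f0 (d : nat) (c : nat -> C) (z : C) : C := monic_eval d c (cexp z).

Definition Fpot (d : nat) (t : R) : R := exp (INR d * t) - 1.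

Definition in_disk (a : C) (r : R) (z : C) : Prop := Cmod (Cminus z a) < r.

Definition is_arg (alpha : C) (theta : R) : Prop :=
  - PI < theta <= PI /\
  alpha = (Cmod alpha * cos theta, Cmod alpha * sin theta).

Definition Abound (d : nat) (x : R) (n : nat) : R :=
  sum_f_R0 (fun r => exp (- (Nat.iter r (Fpot d) x) / 3)) n.

Definition in_A (d : nat) (x : R) (n : nat) (alpha : C) : Prop :=
  alpha <> RtoC 0 /\
  Rabs (ln (Cmod alpha)) < Abound d x n /\
  exists theta, is_arg alpha theta /\ Rabs theta < Abound d x n.

(* Same cluster: equal potential and equal first address entry. *)
Definition same_cluster (t : nat -> nat -> R) (s : nat -> nat -> Z)
  (i j k l : nat) : Prop := t i j = t k l /\ s i j = s k l.

Definition is_Hsep (t : nat -> nat -> R) (s : nat -> nat -> Z)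
  (i j k l H : nat) : Prop :=
  (0 < H)%nat /\ ~ same_cluster t s i (j + H) k (l + H) /\
  forall h, (0 < h < H)%nat -> same_cluster t s i (j + h) k (l + h).

Definition in_D (d : nat) (a : nat -> nat -> C) (s : nat -> nat -> Z)
  (i j k l : nat) (delta : C) : Prop :=
  exists w z, in_disk (a k l) (/ INR l) w /\ in_disk (a i j) (/ INR j) z /\
    delta = Cdiv (Cmult (RtoC (INR d)) (Cminus w z))
                 (Cmult (Cmult (RtoC (2 * PI)) Ci) (RtoC (IZR (s k l - s i j)%Z))).

From Stdlib Require Import Reals ZArith List Lra Lia Psatz.
From Coquelicot Require Import Coquelicot.
Open Scope R_scope.

(* An escaping point of potential t and address s lies within K e^{-t/2} of the
   base point b = t + 2 pi i s/d, where the leading monomial of f_0 = p o exp is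
   e^{dz} with derivative at b equal to the real number d e^{dt} = F'(t).  Hence if
   two orbit points A, B lie near the same base point (they are in one cluster),
   then f_0(B) - f_0(A) = F'(t) (B - A) e^{-lambda} with lambda of real and
   imaginary parts at most e^{-t/3}/2 once t is large (step_linearization).
   Along the H steps during which a_ij and a_kl stay in a common cluster these
   factors multiply: by the chain rule the F'(F^r t) combine into (F^H)'(t), and
   since F more than doubles large potentials, sum_r e^{-F^r(t)/3} stays below 2,
   so the accumulated exponent Lambda defines nu = e^Lambda in A_{t,H-1}
   (cluster_linearization).  Solving for a_kl - a_ij gives the theorem, with delta
   the rescaled difference of the two centres of the disks defining D. *)

Lemma exp_near_0 (x : R) : Rabs x <= /2 ->
  Rabs (exp x - 1) <= 2 * Rabs x /\ Rabs (exp x - 1 - x) <= 2 * x ^ 2 /\ exp x <= 2.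
Proof.
  intros Hx.
  assert (H1 := exp_ineq1_le x).
  assert (H2 := exp_ineq1_le (- x)).
  assert (Hinv : exp x * exp (- x) = 1) by (rewrite <- exp_plus, Rplus_opp_r; apply exp_0).
  assert (Hp := exp_pos x).
  assert (Hxx : - / 2 <= x <= / 2) by (apply Rabs_le_between in Hx; lra).
  assert (H3 : exp x * (1 - x) <= 1) by nra.
  assert (H4 : (exp x - 1 - x) * (1 - x) <= x ^ 2) by nra.
  split; [|split].
  - apply Rabs_le. destruct (Rle_dec 0 x);
      [rewrite Rabs_right by lra | rewrite Rabs_left by lra]; nra.
  - apply Rabs_le; nra.
  - nra.
Qed.

Lemma exp_monotone (x y : R) : x <= y -> exp x <= exp y.
Proof. intros [H|H]; [left; apply exp_increasing; auto | subst; lra]. Qed.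

Lemma exp_pow_INR (x : R) (n : nat) : exp x ^ n = exp (INR n * x).
Proof.
  induction n as [|n IH]; [simpl; rewrite Rmult_0_l, exp_0; auto |].
  rewrite <- tech_pow_Rmult, IH, <- exp_plus, S_INR. f_equal. ring.
Qed.

Lemma Rabs_sqr (x : R) : Rabs x * Rabs x = x * x.
Proof. destruct (Rcase_abs x); [rewrite Rabs_left | rewrite Rabs_right]; lra. Qed.

Lemma Rabs_sin_le (y : R) : Rabs (sin y) <= Rabs y.
Proof.
  destruct (MVT_abs sin cos 0 y) as [z [Hz _]].
  { intros; apply derivable_pt_lim_sin. }
  rewrite sin_0, !Rminus_0_r in Hz. rewrite Hz.
  assert (Rabs (cos z) <= 1) by (apply Rabs_le; apply COS_bound).
  assert (0 <= Rabs y) by apply Rabs_pos. nra.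
Qed.

Lemma one_minus_cos_bound (y : R) : 0 <= 1 - cos y <= y ^ 2 / 2.
Proof.
  assert (Hc : cos y = 1 - 2 * sin (y / 2) * sin (y / 2)).
  { rewrite <- cos_2a_sin. f_equal. field. }
  rewrite Hc.
  assert (Hs := Rabs_sin_le (y / 2)).
  assert (Rabs (sin (y / 2)) * Rabs (sin (y / 2)) <= Rabs (y / 2) * Rabs (y / 2))
    by (apply Rmult_le_compat; auto using Rabs_pos).
  rewrite !Rabs_sqr in H. split; nra.
Qed.

Lemma sin_minus_id_bound (y : R) : Rabs y <= 2 -> Rabs (sin y - y) <= y ^ 2.
Proof.
  intros Hy.
  destruct (MVT_abs (fun x => sin x - x) (fun x => cos x - 1) 0 y) as [z [Hz Hzr]].
  { intros. apply derivable_pt_lim_minus;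
      [apply derivable_pt_lim_sin | apply derivable_pt_lim_id]. }
  rewrite sin_0, !Rminus_0_r in Hz. rewrite Hz.
  assert (Hzy : Rabs z <= Rabs y).
  { unfold Rmin, Rmax in Hzr. destruct (Rle_dec 0 y);
      [rewrite (Rabs_right y), Rabs_right by lra | rewrite (Rabs_left y), Rabs_left1 by lra];
      lra. }
  assert (Hb := one_minus_cos_bound z).
  rewrite Rabs_minus_sym, (Rabs_right (1 - cos z)) by lra.
  assert (Hz2 : z ^ 2 <= y ^ 2).
  { rewrite <- (pow2_abs z), <- (pow2_abs y). assert (0 <= Rabs z) by apply Rabs_pos. nra. }
  assert (0 <= Rabs y) by apply Rabs_pos.
  assert ((1 - cos z) * Rabs y <= y ^ 2 / 2 * 2) by (apply Rmult_le_compat; lra).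
  lra.
Qed.

Lemma Rabs_atan_le (u : R) : Rabs (atan u) <= Rabs u.
Proof.
  destruct (MVT_abs atan (fun x => / (1 + x ^ 2)) 0 u) as [z [Hz _]].
  { intros. apply derivable_pt_lim_atan. }
  rewrite atan_0, !Rminus_0_r in Hz. rewrite Hz.
  assert (0 <= z ^ 2) by apply pow2_ge_0.
  assert (0 < / (1 + z ^ 2) <= 1).
  { split; [apply Rinv_0_lt_compat; lra |].
    rewrite <- Rinv_1. apply Rinv_le_contravar; lra. }
  rewrite (Rabs_right (/ (1 + z ^ 2))) by lra.
  assert (0 <= Rabs u) by apply Rabs_pos. nra.
Qed.

Lemma Rabs_ln_near_1 (x rho : R) : 0 <= rho <= / 4 -> 1 - rho <= x <= 1 + rho ->
  Rabs (ln x) <= 2 * rho.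
Proof.
  intros Hr Hx. apply Rabs_le. split.
  - assert (H := exp_ineq1_le (2 * rho)).
    assert (Hinv : exp (- (2 * rho)) * exp (2 * rho) = 1)
      by (rewrite <- exp_plus, Rplus_opp_l; apply exp_0).
    assert (exp (- (2 * rho)) <= x) by (assert (Hp := exp_pos (- (2 * rho))); nra).
    rewrite <- (ln_exp (- (2 * rho))). apply ln_le; auto. apply exp_pos.
  - assert (H := exp_ineq1_le (ln x)). rewrite exp_ln in H by lra. lra.
Qed.

Lemma Cmod_le_Rabs_sum (z : C) : Cmod z <= Rabs (fst z) + Rabs (snd z).
Proof.
  destruct z as [x y]. unfold Cmod; simpl.
  assert (0 <= Rabs x) by apply Rabs_pos. assert (0 <= Rabs y) by apply Rabs_pos.
  rewrite <- (sqrt_square (Rabs x + Rabs y)) by lra.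
  apply sqrt_le_1_alt.
  assert (H1 := Rabs_sqr x). assert (H2 := Rabs_sqr y). nra.
Qed.

Lemma Rabs_fst_le_Cmod (z : C) : Rabs (fst z) <= Cmod z.
Proof. assert (H := Rmax_Cmod z). assert (H1 := Rmax_l (Rabs (fst z)) (Rabs (snd z))). lra. Qed.

Lemma Rabs_snd_le_Cmod (z : C) : Rabs (snd z) <= Cmod z.
Proof. assert (H := Rmax_Cmod z). assert (H1 := Rmax_r (Rabs (fst z)) (Rabs (snd z))). lra. Qed.

Lemma Cmod_RtoC_mult (x : R) (z : C) : 0 <= x -> Cmod (Cmult (RtoC x) z) = x * Cmod z.
Proof. intros. rewrite Cmod_mult, Cmod_R, Rabs_right; lra. Qed.

Lemma RtoC_neq_0 (x : R) : x <> 0 -> RtoC x <> RtoC 0.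
Proof. intros H E. apply H. exact (f_equal fst E). Qed.

Lemma cexp_add (z w : C) : cexp (Cplus z w) = Cmult (cexp z) (cexp w).
Proof.
  destruct z as [x y], w as [u v]. unfold cexp, Cplus, Cmult; simpl.
  rewrite exp_plus, cos_plus, sin_plus. f_equal; ring.
Qed.

Lemma cexp_0 : cexp (RtoC 0) = RtoC 1.
Proof. unfold cexp, RtoC; simpl. rewrite exp_0, cos_0, sin_0. f_equal; ring. Qed.

Lemma Cmod_cexp (z : C) : Cmod (cexp z) = exp (fst z).
Proof.
  destruct z as [x y]. unfold Cmod, cexp; cbn [fst snd].
  replace ((exp x * cos y) ^ 2 + (exp x * sin y) ^ 2) with (exp x * exp x).
  - apply sqrt_square. apply Rlt_le, exp_pos.
  - assert (H := sin2_cos2 y). unfold Rsqr in H. nra.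
Qed.

Lemma cexp_neq_0 (z : C) : cexp z <> RtoC 0.
Proof.
  intro H. assert (H1 := Cmod_cexp z). rewrite H, Cmod_0 in H1.
  assert (H2 := exp_pos (fst z)). lra.
Qed.

Lemma cexp_pow (z : C) (n : nat) : Cpow (cexp z) n = cexp (Cmult (RtoC (INR n)) z).
Proof.
  induction n as [|n IH].
  - simpl. replace (Cmult (RtoC 0) z) with (RtoC 0) by ring. now rewrite cexp_0.
  - simpl Cpow. rewrite IH, <- cexp_add, S_INR. f_equal.
    rewrite RtoC_plus. ring.
Qed.

Lemma cexp_minus_1_bound (w : C) : Cmod w <= / 2 ->
  Cmod (Cminus (cexp w) (RtoC 1)) <= 5 * Cmod w.
Proof.
  intros Hw. destruct w as [x y].
  assert (Hx := Rabs_fst_le_Cmod (x, y)). assert (Hy := Rabs_snd_le_Cmod (x, y)).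
  simpl in Hx, Hy.
  eapply Rle_trans; [apply Cmod_le_Rabs_sum |]. unfold cexp, Cminus, Cplus, Copp, RtoC; simpl.
  destruct (exp_near_0 x) as [E1 [_ E3]]; [lra |].
  assert (Hc := one_minus_cos_bound y). assert (Hs := Rabs_sin_le y).
  assert (Hep := exp_pos x).
  replace (exp x * cos y + - (1)) with ((exp x - 1) - exp x * (1 - cos y)) by ring.
  replace (exp x * sin y + - (0)) with (exp x * sin y) by ring.
  rewrite Rabs_mult, (Rabs_right (exp x)) by lra.
  assert (H1 : Rabs (exp x - 1 - exp x * (1 - cos y)) <= Rabs (exp x - 1) + exp x * (1 - cos y)).
  { eapply Rle_trans; [apply Rabs_triang |].
    rewrite Rabs_Ropp, Rabs_mult, (Rabs_right (exp x)), (Rabs_right (1 - cos y)); lra. }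
  assert (y ^ 2 <= Cmod (x, y) * Cmod (x, y))
    by (assert (H9 := Rabs_sqr y); assert (0 <= Rabs y) by apply Rabs_pos; nra).
  assert (0 <= Cmod (x, y)) by apply Cmod_ge_0.
  assert (exp x * (1 - cos y) <= 2 * (y ^ 2 / 2)) by (apply Rmult_le_compat; lra).
  assert (exp x * Rabs (sin y) <= 2 * Rabs y)
    by (apply Rmult_le_compat; try lra; apply Rabs_pos).
  nra.
Qed.

Lemma cexp_taylor_2_bound (w : C) : Cmod w <= / 2 ->
  Cmod (Cminus (Cminus (cexp w) (RtoC 1)) w) <= 6 * (Cmod w * Cmod w).
Proof.
  intros Hw. destruct w as [x y].
  assert (Hx := Rabs_fst_le_Cmod (x, y)). assert (Hy := Rabs_snd_le_Cmod (x, y)).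
  simpl in Hx, Hy.
  eapply Rle_trans; [apply Cmod_le_Rabs_sum |]. unfold cexp, Cminus, Cplus, Copp, RtoC; simpl.
  destruct (exp_near_0 x) as [E1 [E2 E3]]; [lra |].
  assert (Hc := one_minus_cos_bound y). assert (Hs := Rabs_sin_le y).
  assert (Hsm : Rabs (sin y - y) <= y ^ 2) by (apply sin_minus_id_bound; lra).
  assert (Hep := exp_pos x).
  replace (exp x * cos y + - (1) + - x) with ((exp x - 1 - x) - exp x * (1 - cos y)) by ring.
  replace (exp x * sin y + - (0) + - y) with ((exp x - 1) * sin y + (sin y - y)) by ring.
  assert (0 <= Cmod (x, y)) by apply Cmod_ge_0.
  assert (Ry : 0 <= Rabs y) by apply Rabs_pos. assert (Rx : 0 <= Rabs x) by apply Rabs_pos.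
  assert (y ^ 2 <= Cmod (x, y) * Cmod (x, y)) by (assert (H9 := Rabs_sqr y); nra).
  assert (x ^ 2 <= Cmod (x, y) * Cmod (x, y)) by (assert (H9 := Rabs_sqr x); nra).
  assert (Hre : Rabs (exp x - 1 - x - exp x * (1 - cos y))
               <= Rabs (exp x - 1 - x) + exp x * (1 - cos y)).
  { eapply Rle_trans; [apply Rabs_triang |].
    rewrite Rabs_Ropp, Rabs_mult, (Rabs_right (exp x)), (Rabs_right (1 - cos y)); lra. }
  assert (Him : Rabs ((exp x - 1) * sin y + (sin y - y))
               <= Rabs (exp x - 1) * Rabs (sin y) + Rabs (sin y - y)).
  { eapply Rle_trans; [apply Rabs_triang |]. rewrite Rabs_mult. lra. }
  assert (exp x * (1 - cos y) <= 2 * (y ^ 2 / 2)) by (apply Rmult_le_compat; lra).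
  assert (Rabs (exp x - 1) * Rabs (sin y) <= (2 * Rabs x) * Rabs y)
    by (apply Rmult_le_compat; auto using Rabs_pos).
  assert (Rabs x * Rabs y <= Cmod (x, y) * Cmod (x, y)) by (apply Rmult_le_compat; lra).
  nra.
Qed.

Lemma log_inverse_near_1 (w : C) (rho : R) : 0 <= rho <= / 4 ->
  Cmod (Cminus w (RtoC 1)) <= rho ->
  exists lam : C, Rabs (fst lam) <= 2 * rho /\ Rabs (snd lam) <= 2 * rho /\
    Cmult w (cexp lam) = RtoC 1.
Proof.
  intros Hr Hw1. destruct w as [p q].
  assert (Hp := Rabs_fst_le_Cmod (Cminus (p, q) (RtoC 1))).
  assert (Hq := Rabs_snd_le_Cmod (Cminus (p, q) (RtoC 1))).
  simpl in Hp, Hq. replace (p + - (1)) with (p - 1) in Hp by ring.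
  replace (q + - (0)) with q in Hq by ring.
  apply Rabs_le_between in Hp. apply Rabs_le_between in Hq.
  set (r := Cmod (p, q)).
  assert (Hr2 : r * r = p ^ 2 + q ^ 2)
    by (unfold r, Cmod; simpl fst; simpl snd; apply sqrt_sqrt; nra).
  assert (Hrb : 1 - rho <= r <= 1 + rho).
  { assert (Ht1 := Cmod_triangle (Cminus (p, q) (RtoC 1)) (RtoC 1)).
    assert (Ht2 := Cmod_triangle (RtoC 1) (Copp (Cminus (p, q) (RtoC 1)))).
    replace (Cplus (Cminus (p, q) (RtoC 1)) (RtoC 1)) with (p, q) in Ht1
      by (unfold Cminus, Cplus, Copp, RtoC; simpl; f_equal; ring).
    replace (Cplus (RtoC 1) (Copp (Cminus (p, q) (RtoC 1)))) with (Cminus (RtoC 2) (p, q)) in Ht2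
      by (unfold Cminus, Cplus, Copp, RtoC; simpl; f_equal; ring).
    rewrite Cmod_opp, Cmod_1 in Ht2. rewrite Cmod_1 in Ht1. fold r in Ht1.
    assert (Hrp : p <= r).
    { unfold r, Cmod; simpl fst; simpl snd.
      rewrite <- (sqrt_square p) at 1 by lra. apply sqrt_le_1_alt. nra. }
    lra. }
  exists (- ln r, - atan (q / p)). cbn [fst snd]. rewrite !Rabs_Ropp. split; [|split].
  - apply Rabs_ln_near_1; lra.
  - eapply Rle_trans; [apply Rabs_atan_le |].
    unfold Rdiv. rewrite Rabs_mult, Rabs_inv, (Rabs_right p) by lra.
    assert (Rabs q <= rho) by (apply Rabs_le; lra).
    apply Rmult_le_reg_r with p; [lra |]. rewrite Rmult_assoc, Rinv_l by lra. nra.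
  - assert (Hs : sqrt (1 + (q / p)²) = r / p).
    { apply Rsqr_inj; [apply sqrt_pos | apply Rlt_le, Rdiv_lt_0_compat; lra |].
      rewrite Rsqr_sqrt by (apply Rplus_le_le_0_compat; [lra | apply Rle_0_sqr]).
      replace ((r / p)²) with ((r * r) / (p * p)) by (unfold Rsqr; field; lra).
      rewrite Hr2. unfold Rsqr. field. lra. }
    unfold cexp; cbn [fst snd].
    rewrite cos_neg, sin_neg, cos_atan, sin_atan, Hs, exp_Ropp, exp_ln by lra.
    unfold Cmult, RtoC; cbn [fst snd]. f_equal; field_simplify; try lra;
      replace (r ^ 2) with (r * r) by ring; rewrite Hr2; field; nra.
Qed.

Lemma log_ratio_near_1 (X Y : C) (rho : R) : 0 <= rho <= / 4 ->
  Cmod (Cminus X Y) <= rho * Cmod Y ->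
  exists lam : C, Rabs (fst lam) <= 2 * rho /\ Rabs (snd lam) <= 2 * rho /\
    Cmult X (cexp lam) = Y.
Proof.
  intros Hr HXY.
  destruct (Ceq_dec Y (RtoC 0)) as [HY|HY].
  - subst Y. rewrite Cmod_0, Rmult_0_r in HXY.
    assert (HX : X = RtoC 0).
    { apply Cmod_eq_0. assert (H0 := Cmod_ge_0 X).
      replace (Cminus X (RtoC 0)) with X in HXY by ring. lra. }
    exists (RtoC 0). rewrite HX. simpl. rewrite Rabs_R0. repeat split; try lra. ring.
  - assert (Hw : Cmod (Cminus (Cdiv X Y) (RtoC 1)) <= rho).
    { replace (Cminus (Cdiv X Y) (RtoC 1)) with (Cdiv (Cminus X Y) Y) by (field; auto).
      rewrite Cmod_div by auto. apply Cmod_gt_0 in HY.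
      apply Rmult_le_reg_r with (Cmod Y); auto. unfold Rdiv.
      rewrite Rmult_assoc, Rinv_l by lra. lra. }
    destruct (log_inverse_near_1 _ _ Hr Hw) as [lam [H1 [H2 H3]]].
    exists lam. split; [exact H1 | split; [exact H2 |]].
    replace X with (Cmult (Cdiv X Y) Y) by (field; auto).
    rewrite <- Cmult_assoc, (Cmult_comm Y), Cmult_assoc, H3. ring.
Qed.

(* |u^n - v^n| <= n R0^{n-1} |u - v| on the disk of radius R0 (multiplied out by R0). *)
Lemma Cpow_lipschitz (u v : C) (R0 : R) (n : nat) : Cmod u <= R0 -> Cmod v <= R0 ->
  Cmod (Cminus (Cpow u n) (Cpow v n)) * R0 <= INR n * R0 ^ n * Cmod (Cminus u v).
Proof.
  intros Hu Hv. assert (HR : 0 <= R0) by (assert (H := Cmod_ge_0 u); lra).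
  induction n as [|n IH].
  - simpl. replace (Cminus (RtoC 1) (RtoC 1)) with (RtoC 0) by ring.
    rewrite Cmod_0. lra.
  - simpl Cpow.
    replace (Cminus (Cmult u (Cpow u n)) (Cmult v (Cpow v n)))
      with (Cplus (Cmult u (Cminus (Cpow u n) (Cpow v n))) (Cmult (Cminus u v) (Cpow v n)))
      by ring.
    assert (Ht := Cmod_triangle (Cmult u (Cminus (Cpow u n) (Cpow v n)))
                                (Cmult (Cminus u v) (Cpow v n))).
    rewrite !Cmod_mult, Cmod_pow in Ht.
    assert (Hvn : Cmod v ^ n <= R0 ^ n) by (apply pow_incr; split; [apply Cmod_ge_0 | auto]).
    assert (H0 := Cmod_ge_0 (Cminus (Cpow u n) (Cpow v n))).
    assert (H1 := Cmod_ge_0 (Cminus u v)).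
    assert (H2 := Cmod_ge_0 u).
    assert (H3 : Cmod u * Cmod (Cminus (Cpow u n) (Cpow v n)) * R0
                 <= R0 * (INR n * R0 ^ n * Cmod (Cminus u v))).
    { rewrite Rmult_assoc. apply Rmult_le_compat; auto. apply Rmult_le_pos; auto. }
    assert (H4 : Cmod (Cminus u v) * Cmod v ^ n * R0 <= Cmod (Cminus u v) * R0 ^ n * R0).
    { apply Rmult_le_compat_r; auto. apply Rmult_le_compat_l; auto. }
    rewrite S_INR. simpl pow.
    apply Rle_trans with ((Cmod u * Cmod (Cminus (Cpow u n) (Cpow v n))
                           + Cmod (Cminus u v) * Cmod v ^ n) * R0).
    + apply Rmult_le_compat_r; auto.
    + nra.
Qed.

Lemma Cpow_lipschitz_below (d k : nat) (u v : C) (R0 : R) : (k < d)%nat -> 1 <= R0 ->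
  Cmod u <= R0 -> Cmod v <= R0 ->
  Cmod (Cminus (Cpow u k) (Cpow v k)) * R0 * R0 <= INR d * R0 ^ d * Cmod (Cminus u v).
Proof.
  intros Hk HR Hu Hv.
  assert (Hl := Cpow_lipschitz u v R0 k Hu Hv).
  assert (Hidx : INR k * R0 ^ k * R0 <= INR d * R0 ^ d).
  { replace (R0 ^ d) with (R0 ^ k * R0 * R0 ^ (d - S k))
      by (replace (R0 ^ k * R0) with (R0 ^ (k + 1)) by (rewrite pow_add; ring);
          rewrite <- pow_add; f_equal; lia).
    assert (1 <= R0 ^ (d - S k)) by (apply pow_R1_Rle; lra).
    assert (INR k <= INR d) by (apply le_INR; lia).
    assert (0 <= INR k) by apply pos_INR.
    assert (1 <= R0 ^ k) by (apply pow_R1_Rle; lra).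
    assert (0 <= R0 ^ k * R0) by nra.
    assert (INR k * (R0 ^ k * R0) <= INR d * (R0 ^ k * R0)) by (apply Rmult_le_compat_r; lra).
    assert (INR d * (R0 ^ k * R0) * 1 <= INR d * (R0 ^ k * R0) * R0 ^ (d - S k))
      by (apply Rmult_le_compat_l; nra).
    lra. }
  assert (H0 := Cmod_ge_0 (Cminus u v)).
  apply Rle_trans with (INR k * R0 ^ k * Cmod (Cminus u v) * R0).
  - apply Rmult_le_compat_r; lra.
  - replace (INR k * R0 ^ k * Cmod (Cminus u v) * R0)
      with (INR k * R0 ^ k * R0 * Cmod (Cminus u v)) by ring.
    apply Rmult_le_compat_r; lra.
Qed.

Definition lower_terms (c : nat -> C) (l : list nat) (u : C) : C :=
  fold_right Cplus (RtoC 0) (map (fun k => Cmult (c k) (Cpow u k)) l).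

Definition coef_mass (c : nat -> C) (l : list nat) : R :=
  fold_right Rplus 0 (map (fun k => Cmod (c k)) l).

Lemma coef_mass_nonneg (c : nat -> C) (l : list nat) : 0 <= coef_mass c l.
Proof.
  unfold coef_mass. induction l as [|k l IH]; simpl; [lra |].
  assert (H := Cmod_ge_0 (c k)). lra.
Qed.

Lemma f0_split (d : nat) (c : nat -> C) (z : C) :
  f0 d c z = Cplus (Cpow (cexp z) d) (lower_terms c (seq 0 d) (cexp z)).
Proof. reflexivity. Qed.

Lemma lower_terms_lipschitz (d : nat) (c : nat -> C) (l : list nat) (u v : C) (R0 : R) :
  1 <= R0 -> Cmod u <= R0 -> Cmod v <= R0 -> (forall k, In k l -> (k < d)%nat) ->
  Cmod (Cminus (lower_terms c l u) (lower_terms c l v)) * R0 * R0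
    <= coef_mass c l * INR d * R0 ^ d * Cmod (Cminus u v).
Proof.
  intros HR Hu Hv Hl. induction l as [|k l IH].
  - unfold lower_terms, coef_mass; simpl.
    replace (Cminus (RtoC 0) (RtoC 0)) with (RtoC 0) by ring.
    rewrite Cmod_0. lra.
  - assert (IH' := IH (fun k' H' => Hl k' (or_intror H'))).
    assert (Hk := Cpow_lipschitz_below d k u v R0 (Hl k (or_introl eq_refl)) HR Hu Hv).
    set (Dl := Cminus (lower_terms c l u) (lower_terms c l v)) in IH'.
    assert (Hsplit : Cmod (Cminus (lower_terms c (k :: l) u) (lower_terms c (k :: l) v))
                     <= Cmod (c k) * Cmod (Cminus (Cpow u k) (Cpow v k)) + Cmod Dl).
    { replace (Cminus (lower_terms c (k :: l) u) (lower_terms c (k :: l) v))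
        with (Cplus (Cmult (c k) (Cminus (Cpow u k) (Cpow v k))) Dl)
        by (unfold Dl, lower_terms; simpl; ring).
      rewrite <- Cmod_mult. apply Cmod_triangle. }
    change (coef_mass c (k :: l)) with (Cmod (c k) + coef_mass c l).
    assert (Hck := Cmod_ge_0 (c k)).
    assert (HR2 : 0 <= R0 * R0) by nra.
    assert (Hterm : Cmod (c k) * (Cmod (Cminus (Cpow u k) (Cpow v k)) * R0 * R0)
                    <= Cmod (c k) * (INR d * R0 ^ d * Cmod (Cminus u v)))
      by (apply Rmult_le_compat_l; lra).
    apply Rle_trans with ((Cmod (c k) * Cmod (Cminus (Cpow u k) (Cpow v k)) + Cmod Dl) * (R0 * R0)).
    + rewrite Rmult_assoc. apply Rmult_le_compat_r; auto.
    + nra.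
Qed.

(* The asymptotic location t + 2 pi i s/d of an escaping point of potential t and
   address entry s; the leading monomial e^{dz} takes the real value e^{dt} there. *)
Definition base_point (d : nat) (tau : R) (s : Z) : C :=
  Cplus (RtoC tau) (Cmult (Cmult (RtoC (2 * PI)) Ci) (RtoC (IZR s / INR d))).

Lemma fst_base_point (d : nat) (tau : R) (s : Z) : fst (base_point d tau s) = tau.
Proof. unfold base_point, Cplus, Cmult, RtoC, Ci; simpl. ring. Qed.

Lemma cexp_base_point (d : nat) (tau : R) (s : Z) : (1 <= d)%nat ->
  cexp (Cmult (RtoC (INR d)) (base_point d tau s)) = RtoC (exp (INR d * tau)).
Proof.
  intros Hd. assert (HD : INR d <> 0) by (apply not_0_INR; lia).
  assert (Hs : sin (IZR s * PI) = 0) by (apply sin_eq_0_1; exists s; auto).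
  assert (Hc : cos (IZR s * PI) * cos (IZR s * PI) = 1)
    by (assert (H := sin2_cos2 (IZR s * PI)); unfold Rsqr in H; rewrite Hs in H; lra).
  assert (E1 : fst (Cmult (RtoC (INR d)) (base_point d tau s)) = INR d * tau)
    by (unfold base_point, Cplus, Cmult, RtoC, Ci; simpl; field; auto).
  assert (E2 : snd (Cmult (RtoC (INR d)) (base_point d tau s)) = 2 * (IZR s * PI))
    by (unfold base_point, Cplus, Cmult, RtoC, Ci; simpl; field; auto).
  unfold cexp. rewrite E1, E2, cos_2a, sin_2a, Hs, Hc. unfold RtoC. f_equal; ring.
Qed.

Lemma monomial_linearization (d : nat) (b eA dl : C) (E e : R) :
  cexp (Cmult (RtoC (INR d)) b) = RtoC E -> 0 < E -> 0 <= e -> 37 * INR d * e <= / 4 ->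
  Cmod eA <= e -> Cmod dl <= 2 * e ->
  Cmod (Cminus (Cminus (Cpow (cexp (Cplus (Cplus b eA) dl)) d) (Cpow (cexp (Cplus b eA)) d))
               (Cmult (RtoC (INR d * E)) dl))
    <= 37 * INR d * e * (INR d * E * Cmod dl).
Proof.
  intros Hb HE He HDe HeA Hdl.
  set (D := INR d) in *.
  assert (HD : 0 <= D) by apply pos_INR.
  set (P := cexp (Cmult (RtoC D) eA)). set (Q := cexp (Cmult (RtoC D) dl)).
  assert (Hsplit : Cminus (Cminus (Cpow (cexp (Cplus (Cplus b eA) dl)) d)
                                  (Cpow (cexp (Cplus b eA)) d)) (Cmult (RtoC (D * E)) dl)
                   = Cmult (RtoC E) (Cplus (Cmult (Cminus P (RtoC 1)) (Cminus Q (RtoC 1)))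
                                           (Cminus (Cminus Q (RtoC 1)) (Cmult (RtoC D) dl)))).
  { rewrite !cexp_pow. fold D.
    replace (Cmult (RtoC D) (Cplus (Cplus b eA) dl))
      with (Cplus (Cmult (RtoC D) b) (Cplus (Cmult (RtoC D) eA) (Cmult (RtoC D) dl))) by ring.
    replace (Cmult (RtoC D) (Cplus b eA))
      with (Cplus (Cmult (RtoC D) b) (Cmult (RtoC D) eA)) by ring.
    rewrite !cexp_add, Hb. fold P Q. rewrite RtoC_mult. ring. }
  rewrite Hsplit, Cmod_RtoC_mult by lra.
  assert (HDdl : Cmod (Cmult (RtoC D) dl) = D * Cmod dl) by (apply Cmod_RtoC_mult; lra).
  assert (HP : Cmod (Cminus P (RtoC 1)) <= 5 * (D * e)).
  { eapply Rle_trans; [apply cexp_minus_1_bound |]; rewrite Cmod_RtoC_mult by lra; nra. }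
  assert (HQ : Cmod (Cminus Q (RtoC 1)) <= 5 * (D * Cmod dl)).
  { rewrite <- HDdl. apply cexp_minus_1_bound. rewrite HDdl. nra. }
  assert (HQ2 : Cmod (Cminus (Cminus Q (RtoC 1)) (Cmult (RtoC D) dl))
                <= 6 * ((D * Cmod dl) * (D * Cmod dl))).
  { rewrite <- HDdl. apply cexp_taylor_2_bound. rewrite HDdl. nra. }
  assert (Ht := Cmod_triangle (Cmult (Cminus P (RtoC 1)) (Cminus Q (RtoC 1)))
                              (Cminus (Cminus Q (RtoC 1)) (Cmult (RtoC D) dl))).
  rewrite Cmod_mult in Ht.
  assert (HP0 := Cmod_ge_0 (Cminus P (RtoC 1))). assert (HQ0 := Cmod_ge_0 (Cminus Q (RtoC 1))).
  assert (Hdl0 := Cmod_ge_0 dl).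
  assert (H1 : Cmod (Cminus P (RtoC 1)) * Cmod (Cminus Q (RtoC 1))
               <= (5 * (D * e)) * (5 * (D * Cmod dl))) by (apply Rmult_le_compat; lra).
  assert (H2 : (D * Cmod dl) * (D * Cmod dl) <= (D * Cmod dl) * (D * (2 * e))).
  { apply Rmult_le_compat_l; [nra |]. apply Rmult_le_compat_l; lra. }
  nra.
Qed.

Lemma lower_terms_increment (d : nat) (c : nat -> C) (tau : R) (A B : C) :
  0 <= tau -> fst A <= tau + 1 -> fst B <= tau + 1 -> Cmod (Cminus B A) <= / 2 ->
  Cmod (Cminus (lower_terms c (seq 0 d) (cexp B)) (lower_terms c (seq 0 d) (cexp A)))
    <= 5 * coef_mass c (seq 0 d) * exp (INR d - 1) * exp (- tau)
       * (INR d * exp (INR d * tau) * Cmod (Cminus B A)).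
Proof.
  intros Htau HA HB Hdl.
  set (R0 := exp (tau + 1)). set (D := INR d). set (S := coef_mass c (seq 0 d)).
  assert (HR1 : 1 <= R0) by (assert (H := exp_ineq1_le (tau + 1)); unfold R0; lra).
  assert (HBR : Cmod (cexp B) <= R0) by (rewrite Cmod_cexp; apply exp_monotone; lra).
  assert (HAR : Cmod (cexp A) <= R0) by (rewrite Cmod_cexp; apply exp_monotone; lra).
  assert (Hdl0 := Cmod_ge_0 (Cminus B A)).
  assert (Hexp : Cmod (Cminus (cexp B) (cexp A)) <= R0 * (5 * Cmod (Cminus B A))).
  { replace B with (Cplus A (Cminus B A)) at 1 by ring. rewrite cexp_add.
    replace (Cminus (Cmult (cexp A) (cexp (Cminus B A))) (cexp A))
      with (Cmult (cexp A) (Cminus (cexp (Cminus B A)) (RtoC 1))) by ring.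
    rewrite Cmod_mult. apply Rmult_le_compat; auto using Cmod_ge_0.
    apply cexp_minus_1_bound; lra. }
  assert (HS := coef_mass_nonneg c (seq 0 d)). fold S in HS.
  assert (HD := pos_INR d). fold D in HD.
  assert (HRd : 0 < R0 ^ d) by (apply pow_lt; lra).
  assert (Hlip := lower_terms_lipschitz d c (seq 0 d) (cexp B) (cexp A) R0 HR1 HBR HAR
                    (fun k Hk => proj2 (proj1 (in_seq d 0 k) Hk))).
  fold S D in Hlip.
  assert (Hlip' : S * D * R0 ^ d * Cmod (Cminus (cexp B) (cexp A))
                  <= S * D * R0 ^ d * (R0 * (5 * Cmod (Cminus B A))))
    by (apply Rmult_le_compat_l; [apply Rmult_le_pos; [nra | lra] | exact Hexp]).
  assert (HRpow : R0 ^ d = exp (D * tau) * (exp (D - 1) * exp (- tau) * R0)).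
  { unfold R0, D. rewrite exp_pow_INR, <- !exp_plus. f_equal. ring. }
  set (Lo := Cminus (lower_terms c (seq 0 d) (cexp B)) (lower_terms c (seq 0 d) (cexp A))) in *.
  assert (HLo := Cmod_ge_0 Lo).
  apply Rmult_le_reg_r with (R0 * R0); [nra |].
  replace (5 * S * exp (D - 1) * exp (- tau) * (D * exp (D * tau) * Cmod (Cminus B A)) * (R0 * R0))
    with (S * D * R0 ^ d * (R0 * (5 * Cmod (Cminus B A)))) by (rewrite HRpow; ring).
  lra.
Qed.

Definition step_const (d : nat) (c : nat -> C) (K : R) : R :=
  37 * INR d * K + 5 * coef_mass c (seq 0 d) * exp (INR d - 1).

Lemma step_const_small (d : nat) (c : nat -> C) (K tau : R) :
  (1 <= d)%nat -> 1 <= K -> 0 <= tau -> step_const d c K * exp (- tau / 6) <= / 4 ->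
  37 * INR d * (K * exp (- tau / 2)) <= / 4 /\
  37 * INR d * (K * exp (- tau / 2))
    + 5 * coef_mass c (seq 0 d) * exp (INR d - 1) * exp (- tau) <= exp (- tau / 3) / 4.
Proof.
  intros Hd HK Ht HM. unfold step_const in HM.
  set (D := INR d) in *. set (S := coef_mass c (seq 0 d)) in *.
  set (x6 := exp (- tau / 6)) in *. set (x3 := exp (- tau / 3)).
  assert (HD1 : 1 <= D) by (unfold D; replace 1 with (INR 1) by reflexivity; apply le_INR; auto).
  assert (HS : 0 <= S) by apply coef_mass_nonneg.
  assert (Hx2 : exp (- tau / 2) = x6 * x3) by (unfold x6, x3; rewrite <- exp_plus; f_equal; field).
  assert (Hx6 : 0 < x6 <= 1) by (split; [apply exp_pos | rewrite <- exp_0; apply exp_monotone; lra]).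
  assert (Hx3 : 0 < x3 <= 1) by (split; [apply exp_pos | rewrite <- exp_0; apply exp_monotone; lra]).
  assert (Hx1 : exp (- tau) <= x6 * x3) by (rewrite <- Hx2; apply exp_monotone; lra).
  assert (Hem1 := exp_pos (D - 1)).
  assert (HSx : 0 <= 5 * S * exp (D - 1) * x6) by (apply Rmult_le_pos; [nra | lra]).
  assert (HKx : 0 <= 37 * D * K * x6) by (repeat apply Rmult_le_pos; lra).
  assert (HKx' : 37 * D * K * x6 <= / 4) by nra.
  rewrite Hx2. split.
  - replace (37 * D * (K * (x6 * x3))) with (37 * D * K * x6 * x3) by ring. nra.
  - assert (5 * S * exp (D - 1) * exp (- tau) <= 5 * S * exp (D - 1) * (x6 * x3))
      by (apply Rmult_le_compat_l; nra).
    nra.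
Qed.

Lemma step_bound (d : nat) (c : nat -> C) (K tau : R) (s : Z) (A B : C) :
  (1 <= d)%nat -> 1 <= K -> 0 <= tau ->
  step_const d c K * exp (- tau / 6) <= / 4 ->
  Cmod (Cminus A (base_point d tau s)) <= K * exp (- tau / 2) ->
  Cmod (Cminus B (base_point d tau s)) <= K * exp (- tau / 2) ->
  Cmod (Cminus (Cminus (f0 d c B) (f0 d c A))
               (Cmult (RtoC (INR d * exp (INR d * tau))) (Cminus B A)))
    <= exp (- tau / 3) / 4 * Cmod (Cmult (RtoC (INR d * exp (INR d * tau))) (Cminus B A)).
Proof.
  intros Hd HK Ht HM HA HB.
  destruct (step_const_small d c K tau Hd HK Ht HM) as [HDe Hcoef].
  set (D := INR d) in *. set (E := exp (D * tau)).
  set (b := base_point d tau s) in *. set (S := coef_mass c (seq 0 d)) in *.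
  set (eA := Cminus A b) in *. set (dl := Cminus B A).
  set (e := K * exp (- tau / 2)) in *.
  assert (HD1 : 1 <= D) by (unfold D; replace 1 with (INR 1) by reflexivity; apply le_INR; auto).
  assert (HE : 0 < E) by apply exp_pos.
  assert (He0 : 0 <= e) by (unfold e; apply Rmult_le_pos; [lra | apply Rlt_le, exp_pos]).
  assert (He1 : 37 * e <= / 4) by nra.
  assert (Hdl0 := Cmod_ge_0 dl).
  assert (Hdl : Cmod dl <= 2 * e).
  { replace dl with (Cminus (Cminus B b) eA) by (unfold dl, eA; ring).
    eapply Rle_trans; [apply Cmod_triangle |]. rewrite Cmod_opp. lra. }
  assert (EA : A = Cplus b eA) by (unfold eA; ring).
  assert (EB : B = Cplus (Cplus b eA) dl) by (unfold dl, eA; ring).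
  assert (Hfst : fst A <= tau + 1 /\ fst B <= tau + 1).
  { assert (H1 := Rabs_fst_le_Cmod eA). assert (H2 := Rabs_fst_le_Cmod dl).
    apply Rabs_le_between in H1. apply Rabs_le_between in H2.
    assert (Hb : fst b = tau) by apply fst_base_point.
    rewrite EB, EA. unfold Cplus. cbn [fst]. lra. }
  assert (Hlead := monomial_linearization d b eA dl E e
                     (cexp_base_point d tau s Hd) HE He0 HDe HA Hdl).
  assert (Hlow := lower_terms_increment d c tau A B Ht (proj1 Hfst) (proj2 Hfst)
                    ltac:(fold dl; lra)).
  fold D E dl S in Hlow. fold D in Hlead.
  rewrite !f0_split, Cmod_RtoC_mult by nra. rewrite EB, EA in Hlow |- *.
  set (Lo := Cminus (lower_terms c (seq 0 d) (cexp (Cplus (Cplus b eA) dl)))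
                    (lower_terms c (seq 0 d) (cexp (Cplus b eA)))) in *.
  replace (Cminus (Cminus (Cplus (Cpow (cexp (Cplus (Cplus b eA) dl)) d)
                                 (lower_terms c (seq 0 d) (cexp (Cplus (Cplus b eA) dl))))
                          (Cplus (Cpow (cexp (Cplus b eA)) d)
                                 (lower_terms c (seq 0 d) (cexp (Cplus b eA)))))
                  (Cmult (RtoC (D * E)) dl))
    with (Cplus (Cminus (Cminus (Cpow (cexp (Cplus (Cplus b eA) dl)) d)
                                (Cpow (cexp (Cplus b eA)) d)) (Cmult (RtoC (D * E)) dl)) Lo)
    by (unfold Lo; ring).
  eapply Rle_trans; [apply Cmod_triangle |].
  assert (HDEd : 0 <= D * E * Cmod dl) by (apply Rmult_le_pos; nra).
  assert (Hfin : (37 * D * e + 5 * S * exp (D - 1) * exp (- tau)) * (D * E * Cmod dl)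
                 <= exp (- tau / 3) / 4 * (D * E * Cmod dl)) by (apply Rmult_le_compat_r; lra).
  lra.
Qed.

Lemma step_linearization (d : nat) (c : nat -> C) (K tau : R) (s : Z) (A B : C) :
  (1 <= d)%nat -> 1 <= K -> 0 <= tau ->
  step_const d c K * exp (- tau / 6) <= / 4 ->
  Cmod (Cminus A (base_point d tau s)) <= K * exp (- tau / 2) ->
  Cmod (Cminus B (base_point d tau s)) <= K * exp (- tau / 2) ->
  exists lam : C,
    Rabs (fst lam) <= exp (- tau / 3) / 2 /\ Rabs (snd lam) <= exp (- tau / 3) / 2 /\
    Cmult (Cminus (f0 d c B) (f0 d c A)) (cexp lam)
      = Cmult (RtoC (INR d * exp (INR d * tau))) (Cminus B A).
Proof.
  intros Hd HK Ht HM HA HB.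
  assert (Hx : 0 < exp (- tau / 3) <= 1)
    by (split; [apply exp_pos | rewrite <- exp_0; apply exp_monotone; lra]).
  destruct (log_ratio_near_1 _ _ (exp (- tau / 3) / 4) ltac:(lra)
              (step_bound d c K tau s A B Hd HK Ht HM HA HB)) as [lam [H1 [H2 H3]]].
  exists lam. split; [lra | split; [lra | exact H3]].
Qed.

Lemma Fpot_growth (d : nat) (x : R) : (1 <= d)%nat -> 0 <= x -> x + x * x / 4 <= Fpot d x.
Proof.
  intros Hd Hx. unfold Fpot.
  assert (HD : 1 <= INR d) by (replace 1 with (INR 1) by reflexivity; apply le_INR; auto).
  assert (H1 : exp x <= exp (INR d * x)) by (apply exp_monotone; nra).
  assert (H2 : exp x = exp (x / 2) * exp (x / 2)) by (rewrite <- exp_plus; f_equal; field).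
  assert (H3 := exp_ineq1_le (x / 2)). nra.
Qed.

Lemma Fpot_iter_ge (d : nat) (x : R) (n : nat) : (1 <= d)%nat -> 0 <= x ->
  x <= Nat.iter n (Fpot d) x.
Proof.
  intros Hd Hx. induction n as [|n IH]; simpl; [lra |].
  assert (H := Fpot_growth d (Nat.iter n (Fpot d) x) Hd ltac:(lra)). nra.
Qed.

Lemma Fpot_halves_weight (d : nat) (x : R) : (1 <= d)%nat -> 4 <= x ->
  exp (- Fpot d x / 3) <= exp (- x / 3) / 2.
Proof.
  intros Hd Hx. assert (H := Fpot_growth d x Hd ltac:(lra)).
  assert (H1 : exp (- Fpot d x / 3) <= exp (- x / 3 + - 1)) by (apply exp_monotone; nra).
  rewrite exp_plus in H1.
  assert (H2 : exp 1 * exp (- 1) = 1) by (rewrite <- exp_plus, Rplus_opp_r; apply exp_0).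
  assert (H3 := exp_ineq1_le 1). assert (H4 := exp_pos (- 1)). assert (H5 := exp_pos (- x / 3)).
  assert (exp (- 1) <= / 2) by nra. nra.
Qed.

Fixpoint iter_deriv (d n : nat) (x : R) : R :=
  match n with
  | O => 1
  | S n' => INR d * exp (INR d * Nat.iter n' (Fpot d) x) * iter_deriv d n' x
  end.

Lemma iter_deriv_pos (d n : nat) (x : R) : (1 <= d)%nat -> 0 < iter_deriv d n x.
Proof.
  intros Hd. induction n as [|n IH]; simpl; [lra |].
  assert (0 < INR d) by (apply lt_0_INR; lia).
  assert (H1 := exp_pos (INR d * Nat.iter n (Fpot d) x)).
  apply Rmult_lt_0_compat; auto. apply Rmult_lt_0_compat; auto.
Qed.

Lemma is_derive_Fpot_iter (d n : nat) (x : R) :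
  is_derive (fun y => Nat.iter n (Fpot d) y) x (iter_deriv d n x).
Proof.
  induction n as [|n IH]; simpl; [apply (is_derive_id x) |].
  assert (HF : is_derive (Fpot d) (Nat.iter n (Fpot d) x)
                 (INR d * exp (INR d * Nat.iter n (Fpot d) x)))
    by (unfold Fpot; auto_derive; auto; ring).
  assert (Hc := is_derive_comp (Fpot d) (fun y => Nat.iter n (Fpot d) y) x _ _ HF IH).
  replace (INR d * exp (INR d * Nat.iter n (Fpot d) x) * iter_deriv d n x)
    with (scal (iter_deriv d n x) (INR d * exp (INR d * Nat.iter n (Fpot d) x)))
    by (unfold scal; simpl; unfold mult; simpl; ring).
  exact Hc.
Qed.

(* The partial sums sum_{r<n} e^{-F^r(x)/3}; A_{x,n} is defined by the (n+1)-st one. *)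
Fixpoint weight_sum (d : nat) (x : R) (n : nat) : R :=
  match n with
  | O => 0
  | S n' => weight_sum d x n' + exp (- Nat.iter n' (Fpot d) x / 3)
  end.

Lemma weight_sum_Abound (d : nat) (x : R) (n : nat) : weight_sum d x (S n) = Abound d x n.
Proof.
  unfold Abound. induction n as [|n IH]; simpl; [lra |].
  simpl in IH. rewrite IH. reflexivity.
Qed.

Lemma weight_sum_pos (d : nat) (x : R) (n : nat) : (0 < n)%nat -> 0 < weight_sum d x n.
Proof.
  intros Hn. destruct n as [|n]; [lia |]. clear Hn. induction n as [|n IH]; simpl.
  - assert (H := exp_pos (- x / 3)). lra.
  - simpl in IH. assert (H := exp_pos (- Nat.iter (S n) (Fpot d) x / 3)). simpl in H. lra.
Qed.

Lemma weight_sum_bound (d : nat) (x : R) (n : nat) : (1 <= d)%nat -> 4 <= x ->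
  weight_sum d x n + 2 * exp (- Nat.iter n (Fpot d) x / 3) <= 2 * exp (- x / 3).
Proof.
  intros Hd Hx. induction n as [|n IH]; simpl; [lra |].
  assert (H := Fpot_halves_weight d (Nat.iter n (Fpot d) x) Hd).
  assert (H1 := Fpot_iter_ge d x n Hd ltac:(lra)).
  specialize (H ltac:(lra)). lra.
Qed.

Lemma Fpot_orbit_unbounded (d : nat) (u : nat -> R) : (1 <= d)%nat -> 0 < u O ->
  (forall n, u (S n) = Fpot d (u n)) ->
  forall T, exists J, forall j, (J <= j)%nat -> T <= u j.
Proof.
  intros Hd Hu0 Hu T. set (q := u O * u O / 4).
  assert (Hq : 0 < q) by (unfold q; nra).
  assert (Hlin : forall n, u O + INR n * q <= u n).
  { induction n as [|n IH]; [simpl; lra |].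
    rewrite Hu, S_INR. assert (0 <= INR n) by apply pos_INR.
    assert (Hun : u O <= u n) by (assert (0 <= INR n * q) by nra; lra).
    assert (Hg := Fpot_growth d (u n) Hd ltac:(lra)).
    assert (u O * u O <= u n * u n) by nra. unfold q in *. lra. }
  destruct (INR_unbounded (T / q)) as [J HJ]. exists J. intros j Hj.
  assert (INR J <= INR j) by (apply le_INR; exact Hj).
  assert (T / q * q = T) by (field; lra).
  assert (Hjq : T <= INR j * q) by nra.
  specialize (Hlin j). lra.
Qed.

Lemma potentials_eventually_large (d m : nat) (t : nat -> nat -> R) : (1 <= d)%nat ->
  (forall i j, (i < m)%nat -> 0 < t i j) ->
  (forall i j, (i < m)%nat -> t i (S j) = Fpot d (t i j)) ->
  forall T, exists J, forall i j, (i < m)%nat -> (J <= j)%nat -> T <= t i j.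
Proof.
  intros Hd Hpos HF T. induction m as [|m IH].
  - exists O. intros; lia.
  - destruct IH as [J1 HJ1]; [intros; apply Hpos; lia | intros; apply HF; lia |].
    destruct (Fpot_orbit_unbounded d (t m) Hd (Hpos m O ltac:(lia))
                (fun n => HF m n ltac:(lia)) T) as [J2 HJ2].
    exists (Nat.max J1 J2). intros i j Hi Hj.
    destruct (Nat.eq_dec i m) as [->|Hne]; [apply HJ2 | apply HJ1]; lia.
Qed.

Definition large_threshold (d : nat) (c : nat -> C) (K : R) : R :=
  6 * ln (4 * step_const d c K + 1) + 4.

Lemma large_threshold_spec (d : nat) (c : nat -> C) (K tau : R) : 0 <= K ->
  large_threshold d c K <= tau -> 4 <= tau /\ step_const d c K * exp (- tau / 6) <= / 4.
Proof.
  intros HK Ht. unfold large_threshold in Ht.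
  set (M := step_const d c K) in *.
  assert (HM : 0 <= M).
  { unfold M, step_const. assert (H1 := coef_mass_nonneg c (seq 0 d)).
    assert (H2 := exp_pos (INR d - 1)). assert (H3 := pos_INR d).
    assert (0 <= 5 * coef_mass c (seq 0 d) * exp (INR d - 1)) by (apply Rmult_le_pos; lra).
    assert (0 <= INR d * K) by nra. nra. }
  assert (Hln : 0 <= ln (4 * M + 1)) by (rewrite <- ln_1; apply ln_le; lra).
  split; [lra |].
  assert (H1 : exp (ln (4 * M + 1)) <= exp (tau / 6)) by (apply exp_monotone; lra).
  rewrite exp_ln in H1 by lra.
  assert (Hinv : exp (- tau / 6) * exp (tau / 6) = 1)
    by (rewrite <- exp_plus; replace (- tau / 6 + tau / 6) with 0 by field; apply exp_0).
  assert (Hp := exp_pos (- tau / 6)). nra.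
Qed.

Section ClusterIteration.

Variables (d : nat) (c : nat -> C) (m : nat) (K : R).
Variables (a : nat -> nat -> C) (t : nat -> nat -> R) (s : nat -> nat -> Z).
Hypothesis hd : (1 <= d)%nat.
Hypothesis hK : 1 <= K.
Hypothesis horbit : forall i j, (i < m)%nat -> a i (S j) = f0 d c (a i j).
Hypothesis htF : forall i j, (i < m)%nat -> t i (S j) = Fpot d (t i j).
Hypothesis hasym : forall i j, (i < m)%nat ->
  Cmod (Cminus (a i j) (base_point d (t i j) (s i j))) <= K * exp (- t i j / 2).

Lemma potential_iterate (i j n : nat) : (i < m)%nat ->
  t i (j + n)%nat = Nat.iter n (Fpot d) (t i j).
Proof.
  intros Hi. induction n as [|n IH]; [now rewrite Nat.add_0_r |].
  rewrite Nat.add_succ_r, htF, IH by exact Hi. reflexivity.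
Qed.

(* Points of one cluster have the same potentials forever, so once they leave the
   common cluster their address entries differ. *)
Lemma cluster_exit_addresses (i j k l n : nat) : (i < m)%nat -> (k < m)%nat ->
  same_cluster t s i j k l -> ~ same_cluster t s i (j + n) k (l + n) ->
  s k (l + n)%nat <> s i (j + n)%nat.
Proof.
  intros Hi Hk [Ht _] Hexit Hs. apply Hexit. split; [| congruence].
  rewrite !potential_iterate, Ht by assumption. reflexivity.
Qed.

Lemma cluster_linearization (i j k l : nat) : (i < m)%nat -> (k < m)%nat ->
  large_threshold d c K <= t i j ->
  forall n, (forall h, (h < n)%nat -> same_cluster t s i (j + h) k (l + h)) ->
  exists L : C,
    Rabs (fst L) <= weight_sum d (t i j) n / 2 /\
    Rabs (snd L) <= weight_sum d (t i j) n / 2 /\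
    Cmult (Cminus (a k (l + n)%nat) (a i (j + n)%nat)) (cexp L)
      = Cmult (RtoC (iter_deriv d n (t i j))) (Cminus (a k l) (a i j)).
Proof.
  intros Hi Hk Hlarge n. induction n as [|n IH]; intros Hcl.
  - exists (RtoC 0). simpl. rewrite !Nat.add_0_r, cexp_0, Rabs_R0.
    split; [lra | split; [lra | ring]].
  - destruct IH as [L [HL1 [HL2 HL]]]; [intros h Hh; apply Hcl; lia |].
    destruct (Hcl n (Nat.lt_succ_diag_r n)) as [Htn Hsn].
    set (tau := Nat.iter n (Fpot d) (t i j)).
    assert (Hti : t i (j + n)%nat = tau) by (apply potential_iterate; exact Hi).
    assert (Htk : t k (l + n)%nat = tau) by (rewrite <- Htn; exact Hti).
    assert (Hx := proj1 (large_threshold_spec d c K (t i j) ltac:(lra) Hlarge)).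
    assert (Htau : t i j <= tau) by (apply Fpot_iter_ge; [exact hd | lra]).
    assert (Hth := large_threshold_spec d c K tau ltac:(lra) ltac:(lra)).
    assert (HA := hasym i (j + n)%nat Hi). assert (HB := hasym k (l + n)%nat Hk).
    rewrite Hti in HA. rewrite Htk, <- Hsn in HB.
    destruct (step_linearization d c K tau (s i (j + n)%nat) _ _ hd hK ltac:(lra)
                (proj2 Hth) HA HB) as [lam [Hl1 [Hl2 Hl]]].
    exists (Cplus L lam). simpl weight_sum. fold tau.
    split; [| split].
    + simpl. eapply Rle_trans; [apply Rabs_triang | lra].
    + simpl. eapply Rle_trans; [apply Rabs_triang | lra].
    + rewrite !Nat.add_succ_r, !horbit, cexp_add by assumption.
      transitivity (Cmult (Cmult (Cminus (f0 d c (a k (l + n)%nat)) (f0 d c (a i (j + n)%nat)))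
                                 (cexp lam)) (cexp L)); [ring |].
      rewrite Hl.
      transitivity (Cmult (RtoC (INR d * exp (INR d * tau)))
                          (Cmult (Cminus (a k (l + n)%nat) (a i (j + n)%nat)) (cexp L))); [ring |].
      rewrite HL. simpl iter_deriv. fold tau. rewrite (RtoC_mult (INR d * exp (INR d * tau))). ring.
Qed.

End ClusterIteration.

Lemma separation_prefix (t : nat -> nat -> R) (s : nat -> nat -> Z) (i j k l H : nat) :
  same_cluster t s i j k l -> is_Hsep t s i j k l H ->
  forall h, (h < H)%nat -> same_cluster t s i (j + h) k (l + h).
Proof.
  intros Hcl [_ [_ Hmid]] [|h] Hh.
  - now rewrite !Nat.add_0_r.
  - apply Hmid. lia.
Qed.

(* e^L lies in A_{x,n} when both parts of L are at most half the weight sum: the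
   weight sum is positive and, for x >= 4, at most 2 < pi, so Im L is the principal
   argument of e^L. *)
Lemma cexp_in_A (d : nat) (x : R) (n : nat) (L : C) : (1 <= d)%nat -> 4 <= x ->
  Rabs (fst L) <= weight_sum d x (S n) / 2 -> Rabs (snd L) <= weight_sum d x (S n) / 2 ->
  in_A d x n (cexp L).
Proof.
  intros Hd Hx H1 H2. unfold in_A. rewrite <- weight_sum_Abound.
  assert (Hpos := weight_sum_pos d x (S n) (Nat.lt_0_succ n)).
  assert (Hle : weight_sum d x (S n) <= 2).
  { assert (Hb := weight_sum_bound d x (S n) Hd Hx).
    assert (Hw := exp_pos (- Nat.iter (S n) (Fpot d) x / 3)).
    assert (exp (- x / 3) <= 1) by (rewrite <- exp_0; apply exp_monotone; lra). lra. }
  assert (HPI := PI2_3_2).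
  split; [apply cexp_neq_0 | split].
  - rewrite Cmod_cexp, ln_exp. lra.
  - exists (snd L). apply Rabs_le_between in H2 as H2'.
    split; [split; [split; lra | rewrite Cmod_cexp; now destruct L] | lra].
Qed.

Lemma center_difference_in_D (d : nat) (a : nat -> nat -> C) (s : nat -> nat -> Z)
  (i j k l : nat) : (0 < j)%nat -> (0 < l)%nat ->
  in_D d a s i j k l
    (Cdiv (Cmult (RtoC (INR d)) (Cminus (a k l) (a i j)))
          (Cmult (Cmult (RtoC (2 * PI)) Ci) (RtoC (IZR (s k l - s i j)%Z)))).
Proof.
  intros Hj Hl. exists (a k l), (a i j).
  split; [| split; [| reflexivity]]; unfold in_disk;
    replace (Cminus _ _) with (RtoC 0) by ring; rewrite Cmod_0;
    apply Rinv_0_lt_compat, lt_0_INR; assumption.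
Qed.

Lemma two_pi_i_integer_neq_0 (n : Z) : n <> 0%Z ->
  Cmult (Cmult (RtoC (2 * PI)) Ci) (RtoC (IZR n)) <> RtoC 0.
Proof.
  intros Hn E. apply (f_equal Cmod) in E.
  rewrite !Cmod_mult, Cmod_Ci, !Cmod_R, Rabs_R0 in E.
  assert (HPI := PI_RGT_0).
  assert (Rabs (IZR n) <> 0) by (intro E2; apply Rabs_eq_0, eq_IZR_R0 in E2; auto).
  rewrite Rabs_right in E by lra.
  apply Rmult_integral in E. destruct E as [E|E]; [lra | contradiction].
Qed.

Lemma solve_linearized (X Y Z L : C) (D D' : R) : D <> 0 -> D' <> 0 -> Z <> RtoC 0 ->
  Cmult X (cexp L) = Cmult (RtoC D') Y ->
  Y = Cmult (Cmult (Cdiv Z (Cmult (RtoC D) (RtoC D'))) (cexp L))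
            (Cdiv (Cmult (RtoC D) X) Z).
Proof.
  intros HD HD' HZ HXY.
  assert (RtoC D <> RtoC 0) by (apply RtoC_neq_0; exact HD).
  assert (RtoC D' <> RtoC 0) by (apply RtoC_neq_0; exact HD').
  transitivity (Cdiv (Cmult X (cexp L)) (RtoC D')); [rewrite HXY; field; auto | field; auto].
Qed.

Theorem mainTheorem5
  (d : nat) (c : nat -> C) (m : nat)
  (a : nat -> nat -> C) (t : nat -> nat -> R) (s : nat -> nat -> Z)
  (hd : (1 <= d)%nat)
  (horbit : forall i j, (i < m)%nat -> a i (S j) = f0 d c (a i j))
  (htpos : forall i j, (i < m)%nat -> 0 < t i j)
  (htF : forall i j, (i < m)%nat -> t i (S j) = Fpot d (t i j))
  (hasym : exists K, forall i j, (i < m)%nat ->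
      Cmod (Cminus (a i j)
              (Cplus (RtoC (t i j))
                 (Cmult (Cmult (RtoC (2 * PI)) Ci) (RtoC (IZR (s i j) / INR d)))))
      <= K * exp (- t i j / 2)) :
  exists J : nat, forall i j k l, (J <= j)%nat -> (i < m)%nat -> (k < m)%nat ->
    a i j <> a k l -> same_cluster t s i j k l ->
    forall H, is_Hsep t s i j k l H ->
    exists nu delta,
      in_A d (t i j) (H - 1) nu /\
      in_D d a s i (j + H) k (l + H) delta /\
      Cminus (a k l) (a i j) =
        Cmult (Cmult
          (Cdiv (Cmult (Cmult (RtoC (2 * PI)) Ci)
                       (RtoC (IZR (s k (l + H)%nat - s i (j + H)%nat)%Z)))
                (Cmult (RtoC (INR d)) (RtoC (Derive (fun x => Nat.iter H (Fpot d) x) (t i j)))))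
          nu) delta.
Proof.
  destruct hasym as [K0 HK0]. set (K := Rmax 1 K0).
  assert (HK : 1 <= K) by apply Rmax_l.
  assert (HasymK : forall i j, (i < m)%nat ->
            Cmod (Cminus (a i j) (base_point d (t i j) (s i j))) <= K * exp (- t i j / 2)).
  { intros i j Hi. eapply Rle_trans; [apply (HK0 i j Hi) |].
    apply Rmult_le_compat_r; [apply Rlt_le, exp_pos | apply Rmax_r]. }
  destruct (potentials_eventually_large d m t hd htpos htF (large_threshold d c K)) as [J HJ].
  exists J. intros i j k l Hj Hi Hk _ Hcl H Hsep.
  assert (Hlarge := HJ i j Hi Hj).
  assert (Hx := proj1 (large_threshold_spec d c K (t i j) ltac:(lra) Hlarge)).
  assert (HH : (0 < H)%nat) by apply Hsep.
  destruct (cluster_linearization d c m K a t s hd HK horbit htF HasymK i j k l Hi Hk Hlarge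
              H (separation_prefix t s i j k l H Hcl Hsep)) as [L [HL1 [HL2 HL]]].
  assert (Hds := cluster_exit_addresses d m t s htF i j k l H Hi Hk Hcl (proj1 (proj2 Hsep))).
  replace H with (S (H - 1)) in HL1, HL2 by lia.
  exists (cexp L), (Cdiv (Cmult (RtoC (INR d)) (Cminus (a k (l + H)%nat) (a i (j + H)%nat)))
                        (Cmult (Cmult (RtoC (2 * PI)) Ci)
                               (RtoC (IZR (s k (l + H)%nat - s i (j + H)%nat)%Z)))).
  split; [apply cexp_in_A; assumption | split; [apply center_difference_in_D; lia |]].
  replace (Derive (fun x => Nat.iter H (Fpot d) x) (t i j)) with (iter_deriv d H (t i j))
    by (symmetry; apply is_derive_unique, is_derive_Fpot_iter).
  apply solve_linearized with (1 := not_0_INR d ltac:(lia)).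
  - apply Rgt_not_eq, iter_deriv_pos, hd.
  - apply two_pi_i_integer_neq_0. lia.
  - exact HL.
Qed.
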